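(* Let $\mathcal{L}$ be a GSOS language (a signature of operators together with a set of GSOS rules over labels $\Delta_\tau$) that is in the simply WB cool format. Then the GSOS law $\rho:\Sigma(\mathrm{Id}\times T)\Rightarrow T\Sigma^{*}$ on $\mathbf{Set}$ induced by $\mathcal{L}$, with $T=\mathcal{P}_c(\Delta_\tau\times\mathrm{Id})$ carrying the monad structure described below (equivalently its extension $\lambda:\Sigma^{*}(\mathrm{Id}\times T)\Rightarrow T\Sigma^{*}$ with $\rho=\lambda\circ\theta$), satisfies continuity, unitality and observability.
   Context: Labels: $\Delta_\tau=\Delta\cup\overline{\Delta}\cup\{\tau\}$ with $\tau$ the internal action. $\Sigma$ is the polynomial $\mathbf{Set}$-functor of the signature, $\Sigma^{*}X$ the set of terms over $X$, $\theta:\Sigma\Rightarrow\Sigma^{*}$ the inclusion of one-layer terms. $\mathcal{P}_c$ is the countable powerset. The monad $T=\mathcal{P}_c(\Delta_\tau\times\mathrm{Id})$ has unit $\eta(x)=\{(\tau,x)\}$ and Kleisli composition $(g\diamond f)(x)=\{(\delta,z)\mid (\delta_1,y)\in f(x),(\delta_2,z)\in g(y),\ \text{and }(\delta_1=\tau,\delta=\delta_2)\text{ or }(\delta_2=\tau,\delta=\delta_1)\}$; Kleisli hom-sets are ordered pointwise by inclusion ($f\le g$ iff $f(x)\subseteq g(x)$ for all $x$), with joins and suprema of chains given by pointwise unions. For a Kleisli endomorphism $\alpha:X\to TX$ its rt-closure is $\alpha^{*}=\bigvee_{n<\omega}(\eta_X\vee\alpha)^n$ (Kleisli powers). GSOS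 rules have the form $\frac{\{x_i\xrightarrow{c}y\}\ \cup\ \{x_i\not\xrightarrow{c}\}}{o(x_1,\dots,x_n)\xrightarrow{\alpha}t}$ with distinct variables, $t$ a term over the $x_i$ and the premise targets $y$; the induced law sends $o((x_1,W_1),\dots,(x_n,W_n))$ (with $W_i\subseteq\Delta_\tau\times X$) to the set of all $(\alpha,t[\ldots])$ obtained from rules of $o$ whose premises are satisfied by the $W_i$ (positive premise $x_i\xrightarrow{c}y$ satisfied by choosing $(c,y')\in W_i$ and substituting $y'$ for $y$). A rule with premise $x_i\xrightarrow{\tau}y$ and conclusion $o(x_1,\dots,x_n)\xrightarrow{\tau}o(x_1,\dots,x_n)[y/x_i]$ is a patience rule for argument $i$ of $o$. An operator is straight if it has no rule in which a variable occurs more than once in the left-hand sides of the premises; smooth if it is straight and has no rule in which a variable occurs both in the target and in the left-hand side of a premise. Argument $i$ of $o$ is active if some rule of $o$ has $x_i$ as left-hand side of a premise. A variable $x$ is receiving in a term $t$ if $t$ is the target of a rule in which $x$ is the right-hand side of a premise; argument $i$ of $o$ is receiving if some variable $x$ is receiving in a term $t$ having a subterm $o(v_1,\dots,v_n)$ with $x$ occurring in $v_i$. $\mathcal{L}$ is simply WB cool if it is positive (no negative premises) and: (1) all operators are straight; (2) the only rules with $\tau$-premises are patience rules; (3) every active argument of an operator has a patience rule; (4) every receiving argument of an operator has a patience rule; (5) all operators are smooth. For a GSOS law $\lambda$ and $f:X\to TX$, $\lambda_X\circ\Sigma^{*}\langle\mathrm{id},f\rangle$ is a Kleisli endomorphism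 of $\Sigma^{*}X$. Continuity: for every $X$ and ascending chain $f_0\le f_1\le\cdots:X\to TX$, $\lambda_X\circ\Sigma^{*}\langle\mathrm{id},\bigvee_i f_i\rangle=\bigvee_i\lambda_X\circ\Sigma^{*}\langle\mathrm{id},f_i\rangle$. Unitality: for every $f:X\to TX$, $\lambda_X\circ\Sigma^{*}\langle\mathrm{id},\eta_X\vee f\rangle\le(\lambda_X\circ\Sigma^{*}\langle\mathrm{id},f\rangle)^{*}$. Observability: for every $f:X\to TX$, $\lambda_X\circ\Sigma^{*}\langle\mathrm{id},f\diamond f\rangle\le(\lambda_X\circ\Sigma^{*}\langle\mathrm{id},f\rangle)^{*}$. *)

From mathcomp Require Import all_boot.

Set Implicit Arguments.
Unset Strict Implicit.
Unset Printing Implicit Defensive.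

Inductive label (D : Type) : Type :=
| Act : D -> label D
| CoAct : D -> label D
| Tau : label D.
Arguments Tau {D}.

Inductive term (O : Type) (ar : O -> nat) (V : Type) : Type :=
| Var : V -> term ar V
| App : forall o : O, ('I_(ar o) -> term ar V) -> term ar V.
Arguments Var {O ar V}.
Arguments App {O ar V}.

Section Terms.
Variables (O : Type) (ar : O -> nat).

Fixpoint subst (V W : Type) (s : V -> term ar W) (t : term ar V) : term ar W :=
  match t with
  | Var v => s v
  | App o ts => App o (fun i => subst s (ts i))
  end.

Definition tmap (V W : Type) (g : V -> W) (t : term ar V) : term ar W :=
  subst (fun v => Var (g v)) t.

Inductive subterm (V : Type) (s : term ar V) : term ar V -> Prop :=
| st_refl : subterm s s
| st_app : forall o (ts : 'I_(ar o) -> term ar V) (i : 'I_(ar o)),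
    subterm s (ts i) -> subterm s (App o ts).

Definition occurs (V : Type) (x : V) (t : term ar V) : Prop := subterm (Var x) t.
End Terms.

(* ---------- GSOS rules ----------
   A rule for operator o (of arity n = ar o):
     positive premises  x_(fst (pos j)) --(snd (pos j))--> y_j   (j < npos)
     negative premises  x_(fst (neg k)) -/-(snd (neg k))->       (k < nneg)
     conclusion         o(x_0,...,x_(n-1)) --lab--> tgt
   where tgt is a term over the variables  inl i = x_i,  inr j = y_j.
   All variables are distinct by construction. *)
Record rule (D O : Type) (ar : O -> nat) (o : O) : Type := Rule {
  npos : nat;
  pos  : 'I_npos -> 'I_(ar o) * label D;
  nneg : nat;
  neg  : 'I_nneg -> 'I_(ar o) * label D;
  lab  : label D;
  tgt  : term ar ('I_(ar o) + 'I_npos)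
}.
Arguments npos {D O ar o} r.
Arguments pos {D O ar o} r j.
Arguments nneg {D O ar o} r.
Arguments neg {D O ar o} r k.
Arguments lab {D O ar o} r.
Arguments tgt {D O ar o} r.

Definition language (D O : Type) (ar : O -> nat) := forall o : O, rule D ar o -> Prop.

Definition countable_set (A : Type) (S : A -> Prop) : Prop :=
  exists g : nat -> option A, forall a, S a -> exists n, g n = Some a.

Section Law.
Variables (D O : Type) (ar : O -> nat) (L : language D ar).

(* Elements of T X = P_c(Delta_tau x X) are represented as predicates on
   label D * X; Kleisli arrows X -> T Y as X -> (label D * Y -> Prop). *)

(* The GSOS law  lambda_X : Sigma^*(X x T X) -> T Sigma^* X  induced by L
   (the inductive extension of the one-layer law rho, with rho = lambda . theta). *)
Fixpoint lam (X : Type) (t : term ar (X * (label D * X -> Prop)))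
  : label D * term ar X -> Prop :=
  match t with
  | Var xW => fun p => exists y, p.2 = Var y /\ xW.2 (p.1, y)
  | App o ts => fun p =>
      exists r : rule D ar o, L r /\
      exists ys : 'I_(npos r) -> term ar X,
        (forall j, lam (ts (pos r j).1) ((pos r j).2, ys j)) /\
        (forall k u, ~ lam (ts (neg r k).1) ((neg r k).2, u)) /\
        p.1 = lab r /\
        p.2 = subst (fun v => match v with
                              | inl i => tmap fst (ts i)
                              | inr j => ys j
                              end) (tgt r)
  end.

Definition lift (X : Type) (f : X -> label D * X -> Prop)
  : term ar X -> label D * term ar X -> Prop :=
  fun t => lam (tmap (fun x => (x, f x)) t).
End Law.

Section Kleisli.
Variable D : Type.

Definition keta (X : Type) : X -> label D * X -> Prop :=
  fun x p => p = (Tau, x).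

Definition kcomp (X Y Z : Type) (g : Y -> label D * Z -> Prop)
  (f : X -> label D * Y -> Prop) : X -> label D * Z -> Prop :=
  fun x p => exists d1 y d2,
    f x (d1, y) /\ g y (d2, p.2) /\
    ((d1 = Tau /\ p.1 = d2) \/ (d2 = Tau /\ p.1 = d1)).

Definition kle (X Y : Type) (f g : X -> label D * Y -> Prop) : Prop :=
  forall x p, f x p -> g x p.

Definition kjoin (X Y : Type) (f g : X -> label D * Y -> Prop)
  : X -> label D * Y -> Prop :=
  fun x p => f x p \/ g x p.

Fixpoint kpow (X : Type) (a : X -> label D * X -> Prop) (n : nat)
  : X -> label D * X -> Prop :=
  match n with
  | 0 => @keta X
  | n.+1 => kcomp a (kpow a n)
  end.

Definition rtclos (X : Type) (a : X -> label D * X -> Prop)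
  : X -> label D * X -> Prop :=
  fun x p => exists n, kpow (kjoin (@keta X) a) n x p.

Definition kcountable (X Y : Type) (f : X -> label D * Y -> Prop) : Prop :=
  forall x, countable_set (f x).
End Kleisli.

Section Props.
Variables (D O : Type) (ar : O -> nat) (L : language D ar).

Definition law_continuous : Prop :=
  forall (X : Type) (f : nat -> X -> label D * X -> Prop),
    (forall n, kcountable (f n)) ->
    (forall n, kle (f n) (f n.+1)) ->
    lift L (fun x p => exists n, f n x p) = (fun t p => exists n, lift L (f n) t p).

Definition law_unital : Prop :=
  forall (X : Type) (f : X -> label D * X -> Prop),
    kcountable f ->
    kle (lift L (kjoin (@keta D X) f)) (rtclos (lift L f)).

Definition law_observable : Prop :=
  forall (X : Type) (f : X -> label D * X -> Prop),
    kcountable f ->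
    kle (lift L (kcomp f f)) (rtclos (lift L f)).
End Props.

Section Format.
Variables (D O : Type) (ar : O -> nat) (L : language D ar).

Definition positive_lang : Prop :=
  forall o (r : rule D ar o), L r -> nneg r = 0.

Definition premise_lhs o (r : rule D ar o) (q : 'I_(npos r) + 'I_(nneg r)) : 'I_(ar o) :=
  match q with inl j => (pos r j).1 | inr k => (neg r k).1 end.

Definition straight_op (o : O) : Prop :=
  forall r : rule D ar o, L r -> injective (@premise_lhs o r).

Definition smooth_op (o : O) : Prop :=
  straight_op o /\
  forall r : rule D ar o, L r -> forall q : 'I_(npos r) + 'I_(nneg r), ~ occurs (inl (premise_lhs q)) (tgt r).

(* r is a patience rule for argument i of o:
     x_i --tau--> y   /   o(x_0..x_(n-1)) --tau--> o(x_0..x_(n-1))[y/x_i]  *)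
Definition patience_rule o (r : rule D ar o) (i : 'I_(ar o)) : Prop :=
  nneg r = 0 /\
  exists j : 'I_(npos r),
    (forall j', j' = j) /\
    pos r j = (i, Tau) /\
    lab r = Tau /\
    tgt r = App o (fun k => if k == i then Var (inr j) else Var (inl k)).

Definition has_patience_rule (o : O) (i : 'I_(ar o)) : Prop :=
  exists r : rule D ar o, L r /\ patience_rule r i.

Definition has_tau_premise o (r : rule D ar o) : Prop :=
  (exists j, (pos r j).2 = Tau) \/ (exists k, (neg r k).2 = Tau).

Definition active_arg (o : O) (i : 'I_(ar o)) : Prop :=
  exists (r : rule D ar o) (q : 'I_(npos r) + 'I_(nneg r)), L r /\ premise_lhs q = i.

Definition receiving_arg (o : O) (i : 'I_(ar o)) : Prop :=
  exists o' (r : rule D ar o') (j : 'I_(npos r)) (vs : 'I_(ar o) -> term ar ('I_(ar o') + 'I_(npos r))),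
    L r /\ subterm (App o vs) (tgt r) /\ occurs (inr j) (vs i).

Definition simply_WB_cool : Prop :=
  positive_lang /\
  (forall o, straight_op o) /\
  (forall o (r : rule D ar o), L r -> has_tau_premise r -> exists i, patience_rule r i) /\
  (forall (o : O) (i : 'I_(ar o)), active_arg i -> has_patience_rule i) /\
  (forall (o : O) (i : 'I_(ar o)), receiving_arg i -> has_patience_rule i) /\
  (forall o, smooth_op o).
End Format.

From Stdlib Require Import FunctionalExtensionality PropExtensionality IndefiniteDescription Classical.
From mathcomp Require Import all_boot.

Set Implicit Arguments.
Unset Strict Implicit.
Unset Printing Implicit Defensive.

(* Write [weak (lift L f)] for the weak transitions of the lifted system: tau steps
   with at most one visible step among them.  In a simply WB cool language every rule
   is sound for weak transitions: if its premises hold as weak transitions of the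
   arguments, its conclusion holds as a weak transition of the term.  The tau steps
   preceding the visible premise steps are replayed inside the arguments, which are
   active and hence have patience rules; the rule then fires; the tau steps following
   the premise steps are replayed inside the target at the occurrences of the premise
   targets, which are receiving and hence patient, while smoothness keeps the premise
   sources out of the target.  A rule with a tau premise is a patience rule, so there
   the whole premise is replayed in place.  Consequently a transition of
   [lift L (eta \/ f)] or of [lift L (f <> f)] is a weak transition of [lift L f],
   which lies in its rt-closure.  Continuity holds because a derivation uses only
   finitely many premises. *)

Section LabelComposition.
Variable D : Type.

Definition label_comp (d1 d2 d : label D) : Prop :=
  (d1 = Tau /\ d = d2) \/ (d2 = Tau /\ d = d1).

Lemma label_comp_tauL d : label_comp Tau d d.
Proof. by left. Qed.

Lemma label_comp_tauR d : label_comp d Tau d.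
Proof. by right. Qed.

Lemma label_comp_tau d1 d2 : label_comp d1 d2 Tau -> d1 = Tau /\ d2 = Tau.
Proof. by case=> [][-> <-]. Qed.

Lemma label_compA d1 d2 d e1 e2 :
  label_comp d1 d2 d -> label_comp e1 e2 d2 ->
  exists m, label_comp d1 e1 m /\ label_comp m e2 d.
Proof.
case=> [][-> ->]; last first.
  by move/label_comp_tau=> [-> ->]; exists d1; split; right.
by case=> [][-> ->]; [exists Tau | exists e1]; split; by [left | right].
Qed.

End LabelComposition.

Section WeakTransitions.
Variables (D X : Type) (g : X -> label D * X -> Prop).

(* [d] is visible at most once along the path: [label_comp d1 d2 d] forces one of
   [d1], [d2] to be [Tau]. *)
Inductive weak (x : X) : label D -> X -> Prop :=
| weak_refl : weak x Tau x
| weak_step d1 y d2 z d :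
    weak x d1 y -> g y (d2, z) -> label_comp d1 d2 d -> weak x d z.

Lemma weak1 x d y : g x (d, y) -> weak x d y.
Proof. by move=> gxy; apply: weak_step (weak_refl x) gxy (label_comp_tauL d). Qed.

Lemma weak_trans x d1 y d2 z d :
  weak x d1 y -> weak y d2 z -> label_comp d1 d2 d -> weak x d z.
Proof.
move=> wxy wyz; elim: wyz d => [|e1 w e2 z' d2' _ IH gwz c12] d c.
  by case: c => [][? ->]; subst.
have [m [c1 c2]] := label_compA c c12.
exact: weak_step (IH _ c1) gwz c2.
Qed.

Lemma weak_visible x d z :
  weak x d z -> d <> Tau ->
  exists a b, [/\ weak x Tau a, g a (d, b) & weak b Tau z].
Proof.
elim=> [|d1 y d2 z' d' wxy IH gyz [[d1_tau ->]|[d2_tau ->]]] // dNtau.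
  by subst d1; exists y, z'; split=> //; apply: weak_refl.
subst d2.
have [a [b [wxa gab wby]]] := IH dNtau.
by exists a, b; split=> //; apply: weak_step wby gyz (label_comp_tauL Tau).
Qed.

Lemma weak_rtclos x d z : weak x d z -> rtclos g x (d, z).
Proof.
elim=> [|d1 y d2 z' d' _ [n IH] gyz c]; first by exists 0.
by exists n.+1, d1, y, d2; do !split=> //; right.
Qed.

End WeakTransitions.

Lemma kle_chain (D X : Type) (f : nat -> X -> label D * X -> Prop) n m :
  (forall k, kle (f k) (f k.+1)) -> n <= m -> kle (f n) (f m).
Proof.
move=> fS /subnK <-; elim: (m - n) => [|k IH] x p //.
by move/IH; apply: fS.
Qed.

Section Terms.
Variables (O : Type) (ar : O -> nat).

Lemma eq_subst_occurs (V W : Type) (s s' : V -> term ar W) t :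
  (forall v, occurs v t -> s v = s' v) -> subst s t = subst s' t.
Proof.
elim: t => [v|o ts IH] ss' /=; first by apply: ss'; constructor.
congr App; apply: functional_extensionality => i; apply: IH => v tiv.
by apply: ss'; apply: st_app tiv.
Qed.

Lemma tmap_fst_graph (X Y : Type) (h : X -> Y) (t : term ar X) :
  tmap fst (tmap (fun x => (x, h x)) t) = t.
Proof.
elim: t => [//|o ts IH]; rewrite /tmap /=.
by congr App; apply: functional_extensionality => i; apply: IH.
Qed.

Definition tgt_env (X : Type) n m (ss : 'I_n -> term ar X) (ys : 'I_m -> term ar X)
  (v : 'I_n + 'I_m) : term ar X :=
  match v with inl i => ss i | inr j => ys j end.

End Terms.

Section PositiveLaw.
Variables (D O : Type) (ar : O -> nat) (L : language D ar).
Hypothesis Lpos : positive_lang L.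
Variable X : Type.

Lemma lift_AppP (f : X -> label D * X -> Prop) o (ss : 'I_(ar o) -> term ar X) p :
  lift L f (App o ss) p <->
  exists2 r : rule D ar o, L r &
    exists2 ys : 'I_(npos r) -> term ar X,
      forall j, lift L f (ss (pos r j).1) ((pos r j).2, ys j) &
      p = (lab r, subst (tgt_env ss ys) (tgt r)).
Proof.
have graphK i : tmap fst (tmap (fun x => (x, f x)) (ss i)) = ss i.
  exact: tmap_fst_graph.
split.
  case=> r [Lr [ys [prem [_ [lab_p tgt_p]]]]]; exists r => //; exists ys => //.
  rewrite [p]surjective_pairing lab_p tgt_p; congr pair.
  by apply: eq_subst_occurs => -[i|j] _ //; apply: graphK.
case=> r Lr [ys prem ->]; exists r; split=> //; exists ys; split=> //; split.
  by move=> k; have := ltn_ord k; rewrite {2}(Lpos Lr).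
split=> //=; apply: eq_subst_occurs => -[i|j] _ //=.
by rewrite graphK.
Qed.

Lemma le_lift (f g : X -> label D * X -> Prop) : kle f g -> kle (lift L f) (lift L g).
Proof.
move=> fg t; elim: t => [x|o ss IH] [d u].
  by case=> y [uy fxy]; exists y; split; last exact: fg.
case/lift_AppP=> r Lr [ys prem ->].
by apply/lift_AppP; exists r => //; exists ys => // j; apply: IH.
Qed.

Lemma lift_sup_chain (f : nat -> X -> label D * X -> Prop) :
  (forall n, kle (f n) (f n.+1)) ->
  kle (lift L (fun x p => exists n, f n x p)) (fun t p => exists n, lift L (f n) t p).
Proof.
move=> fS t; elim: t => [x|o ss IH] [d u].
  by case=> y [uy [n fxy]]; exists n, y.
case/lift_AppP=> r Lr [ys prem ->].
have [N premN] := functional_choice _ (fun j => IH _ _ (prem j)).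
exists (\max_(j < npos r) N j); apply/lift_AppP; exists r => //; exists ys => // j.
exact: le_lift (kle_chain fS (leq_bigmax j)) _ _ (premN j).
Qed.

Section TauMoves.
Variable f : X -> label D * X -> Prop.

Definition tau_in_arg o (i : 'I_(ar o)) (a b : term ar X) : Prop :=
  a = b \/ (has_patience_rule L i /\ weak (lift L f) a Tau b).

Lemma lift_patience o (i : 'I_(ar o)) (u u' : 'I_(ar o) -> term ar X) :
  has_patience_rule L i -> (forall k, k != i -> u k = u' k) ->
  lift L f (u i) (Tau, u' i) -> lift L f (App o u) (Tau, App o u').
Proof.
move=> [r [Lr [_ [j0 [j0_uniq [pos_j0 [lab_r tgt_r]]]]]]] uu' step_i.
apply/lift_AppP; exists r => //; exists (fun=> u' i).
  by move=> j; rewrite (j0_uniq j) pos_j0.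
rewrite lab_r tgt_r; congr (_, App o _); apply: functional_extensionality => k /=.
by case: eqVneq => [->|/uu'].
Qed.

Lemma weak_tau_arg o (i : 'I_(ar o)) (u u' : 'I_(ar o) -> term ar X) :
  (forall k, k != i -> u k = u' k) -> tau_in_arg i (u i) (u' i) ->
  weak (lift L f) (App o u) Tau (App o u').
Proof.
have at_i y : (fun k => if k == i then y else u k) i = y by rewrite eqxx.
move=> uu' [ui|[patient_i wu]].
  have -> : u' = u.
    by apply: functional_extensionality => k; case: (eqVneq k i) => [->|/uu'].
  exact: weak_refl.
have -> : u' = (fun k => if k == i then u' i else u k).
  by apply: functional_extensionality => k; case: eqVneq => [->|/uu'].
suff tau_path d y : weak (lift L f) (u i) d y -> d = Tau ->
    weak (lift L f) (App o u) Tau (App o (fun k => if k == i then y else u k)).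
  exact: tau_path wu erefl.
elim=> {d y} [|d1 y d2 z d _ IH step c] d_tau.
  have -> : (fun k => if k == i then u i else u k) = u.
    by apply: functional_extensionality => k; case: eqVneq => [->|].
  exact: weak_refl.
move: c; rewrite d_tau => /label_comp_tau[d1_tau d2_tau]; subst d1 d2.
apply: weak_step (IH erefl) _ (label_comp_tauL Tau).
apply: lift_patience patient_i _ _; last by rewrite !at_i.
by move=> k /negbTE ->.
Qed.

Lemma weak_tau_args o (u u' : 'I_(ar o) -> term ar X) :
  (forall k, tau_in_arg k (u k) (u' k)) -> weak (lift L f) (App o u) Tau (App o u').
Proof.
move=> uu'.
suff prefix (s : seq 'I_(ar o)) : weak (lift L f) (App o u) Tau
                  (App o (fun k => if k \in s then u' k else u k)).
  have -> : u' = (fun k => if k \in enum 'I_(ar o) then u' k else u k).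
    by apply: functional_extensionality => k; rewrite mem_enum.
  exact: prefix.
elim: s => [|k s IH].
  have -> : (fun k => if k \in [::] then u' k else u k) = u.
    by apply: functional_extensionality => k; rewrite in_nil.
  exact: weak_refl.
apply: weak_trans IH _ (label_comp_tauL Tau).
apply: (weak_tau_arg (i := k)) => [k' k'Nk|]; first by rewrite in_cons (negbTE k'Nk).
by rewrite in_cons eqxx /=; case: ifP => _; [left | apply: uu'].
Qed.

Lemma weak_tau_subst (V : Type) (Rv : V -> Prop) (t : term ar V) (s1 s2 : V -> term ar X) :
  (forall v, occurs v t -> s1 v = s2 v \/ (Rv v /\ weak (lift L f) (s1 v) Tau (s2 v))) ->
  (forall o (vs : 'I_(ar o) -> term ar V) k v,
      subterm (App o vs) t -> occurs v (vs k) -> Rv v -> has_patience_rule L k) ->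
  weak (lift L f) (subst s1 t) Tau (subst s2 t).
Proof.
elim: t => [v|o ts IH] s12 patient /=.
  by case: (s12 v (st_refl _)) => [->|[_ //]]; apply: weak_refl.
apply: weak_tau_args => k.
case: (classic (exists2 v, occurs v (ts k) & Rv v)) => [[v tkv Rv_v]|noRv].
  right; split; first exact: (patient o ts k v (st_refl _) tkv Rv_v).
  apply: IH => [v' tkv'|o' vs k' v' sub]; first by apply: s12; apply: st_app tkv'.
  by apply: patient; apply: st_app sub.
left; apply: eq_subst_occurs => v tkv.
case: (s12 v (st_app tkv)) => // -[Rv_v _].
by case: noRv; exists v.
Qed.

End TauMoves.

Section RuleSoundness.
Variable f : X -> label D * X -> Prop.
Hypothesis Lsmooth : forall o, smooth_op L o.
Hypothesis Ltau_patience :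
  forall o (r : rule D ar o), L r -> has_tau_premise r -> exists i, patience_rule r i.
Hypothesis Lactive : forall o (i : 'I_(ar o)), active_arg L i -> has_patience_rule L i.
Hypothesis Lreceiving : forall o (i : 'I_(ar o)), receiving_arg L i -> has_patience_rule L i.

Lemma weak_rule_patience o (r : rule D ar o) (ss : 'I_(ar o) -> term ar X) ys :
  L r -> has_tau_premise r ->
  (forall j, weak (lift L f) (ss (pos r j).1) (pos r j).2 (ys j)) ->
  weak (lift L f) (App o ss) (lab r) (subst (tgt_env ss ys) (tgt r)).
Proof.
move=> Lr /(Ltau_patience Lr)[i patience_r] prem.
have patient_i : has_patience_rule L i by exists r.
case: patience_r => _ [j0 [_ [pos_j0 [-> ->]]]].
apply: (weak_tau_arg (i := i)) => [k /negbTE /= -> //|].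
rewrite /= eqxx; right; split=> //.
by have := prem j0; rewrite pos_j0.
Qed.

Lemma weak_rule_visible o (r : rule D ar o) (ss : 'I_(ar o) -> term ar X) ys :
  L r -> ~ has_tau_premise r ->
  (forall j, weak (lift L f) (ss (pos r j).1) (pos r j).2 (ys j)) ->
  weak (lift L f) (App o ss) (lab r) (subst (tgt_env ss ys) (tgt r)).
Proof.
move=> Lr no_tau prem.
have split_prem j : exists ab : term ar X * term ar X,
    [/\ weak (lift L f) (ss (pos r j).1) Tau ab.1,
        lift L f ab.1 ((pos r j).2, ab.2) & weak (lift L f) ab.2 Tau (ys j)].
  have [tau_j|a [b [? ? ?]]] := weak_visible (prem j); last by exists (a, b).
  by case: no_tau; left; exists j.
have [ab /all_and3[pre visible post]] := functional_choice _ split_prem.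
(* Argument [k] after the tau steps preceding its visible premise step; by
   straightness at most one premise reads [k]. *)
pose src k := if [pick j | (pos r j).1 == k] is Some j then (ab j).1 else ss k.
have src_pos j : src (pos r j).1 = (ab j).1.
  rewrite /src; case: pickP => [j' /eqP same|/(_ j)]; last by rewrite eqxx.
  by have [->] := (Lsmooth o).1 r Lr (inl j') (inl j) same.
have to_src : weak (lift L f) (App o ss) Tau (App o src).
  apply: weak_tau_args => k; rewrite /src; case: pickP => [j /eqP <-|_]; last by left.
  by right; split; [apply: Lactive; exists r, (inl j) | apply: pre].
have visible_step : lift L f (App o src) (lab r, subst (tgt_env src (fun j => (ab j).2)) (tgt r)).
  by apply/lift_AppP; exists r => //; exists (fun j => (ab j).2) => // j; rewrite src_pos.
have from_tgt : weak (lift L f) (subst (tgt_env src (fun j => (ab j).2)) (tgt r)) Tau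
                  (subst (tgt_env ss ys) (tgt r)).
  apply: (weak_tau_subst (Rv := fun v => exists j, v = inr j)).
    move=> [k occ_k|j _]; last by right; split; [exists j | apply: post].
    left; rewrite /= /src; case: pickP => [j /eqP pos_j|//].
    by case: ((Lsmooth o).2 r Lr (inl j)); rewrite /= pos_j.
  by move=> o' vs k v sub occ [j v_j]; apply: Lreceiving; exists o, r, j, vs; rewrite -v_j.
apply: weak_trans to_src (weak_trans (weak1 visible_step) from_tgt _) _.
  exact: label_comp_tauR.
exact: label_comp_tauL.
Qed.

Lemma weak_rule o (r : rule D ar o) (ss : 'I_(ar o) -> term ar X) ys :
  L r -> (forall j, weak (lift L f) (ss (pos r j).1) (pos r j).2 (ys j)) ->
  weak (lift L f) (App o ss) (lab r) (subst (tgt_env ss ys) (tgt r)).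
Proof.
move=> Lr; case: (classic (has_tau_premise r)) => [tau|no_tau].
  exact: weak_rule_patience.
exact: weak_rule_visible.
Qed.

Lemma lift_weak (g : X -> label D * X -> Prop) :
  (forall x d y, g x (d, y) -> weak (lift L f) (Var x) d (Var y)) ->
  forall t d u, lift L g t (d, u) -> weak (lift L f) t d u.
Proof.
move=> g_weak; elim=> [x|o ss IH] d u.
  by case=> y [/= -> gxy]; apply: g_weak.
case/lift_AppP=> r Lr [ys prem [-> ->]].
by apply: weak_rule => // j; apply: IH.
Qed.

End RuleSoundness.
End PositiveLaw.

Theorem mainTheorem2 (D O : Type) (ar : O -> nat) (L : language D ar) :
  simply_WB_cool L ->
  law_continuous L /\ law_unital L /\ law_observable L.
Proof.
case=> Lpos [_ [Ltau_patience [Lactive [Lreceiving Lsmooth]]]].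
have lift_rtclos X (f g : X -> label D * X -> Prop) :
    (forall x d y, g x (d, y) -> weak (lift L f) (Var x) d (Var y)) ->
    kle (lift L g) (rtclos (lift L f)).
  move=> g_weak t [d u] /(lift_weak Lpos Lsmooth Ltau_patience Lactive Lreceiving g_weak).
  exact: weak_rtclos.
split; [|split].
- move=> X f _ f_chain.
  apply: functional_extensionality => t; apply: functional_extensionality => p.
  apply: propositional_extensionality; split; first exact: lift_sup_chain.
  by case=> n; apply: le_lift => // x q fnxq; exists n.
- move=> X f _; apply: lift_rtclos => x d y [[-> ->]|fxy]; first exact: weak_refl.
  by apply: weak1; exists y.
- move=> X f _; apply: lift_rtclos => x d y [d1 [z [d2 [fxz [fzy c]]]]].
  by apply: weak_step (weak1 (_ : lift L f _ (d1, Var z))) _ c; [exists z | exists y].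
Qed.
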